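(* Let $n\ge 2$ and let $f$ be the function on $\mathbb{F}_{2^n}$ defined by $f(0)=1$, $f(1)=0$ and $f(x)=x^{-1}$ for $x\notin\{0,1\}$. For $a,b\in\mathbb{F}_{2^n}$ let $\nabla_f(a,b)$ be the number of $x\in\mathbb{F}_{2^n}$ with $f(x+a+b)+f(x+a)+f(x+b)+f(x)=0$, and for $i\in\{0,4,8\}$ let $\omega_i$ be the number of pairs $(a,b)\in\mathbb{F}_{2^n}\times\mathbb{F}_{2^n}$ with $ab(a+b)\neq 0$ and $\nabla_f(a,b)=i$. Then $\omega_8=6$ if $3\mid n$ and $\omega_8=0$ if $3\nmid n$; \[ \omega_4=\begin{cases}2^{n+1}-14,& 2\mid n,\ 3\mid n,\\ 2^{n+1}-2,& 2\mid n,\ 3\nmid n,\\ 2^{n+1}-16,& 2\nmid n,\ 3\mid n,\\ 2^{n+1}-4,& 2\nmid n,\ 3\nmid n;\end{cases} \qquad \omega_0=\begin{cases}2^{2n}-5\cdot2^n+10,& 2\mid n,\ 3\mid n,\\ 2^{2n}-5\cdot2^n+4,& 2\mid n,\ 3\nmid n,\\ 2^{2n}-5\cdot2^n+12,& 2\nmid n,\ 3\mid n,\\ 2^{2n}-5\cdot2^n+6,& 2\nmid n,\ 3\nmid n.\end{cases} \]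
   Context: This is the second-order zero differential spectrum of $Inv\circ(0,1)$, where $Inv(x)=x^{2^n-2}$ and $(0,1)$ is the transposition swapping $0$ and $1$. Pairs with $ab(a+b)=0$ (for which $\nabla_f(a,b)=2^n$) are not counted in the $\omega_i$. *)

From HB Require Import structures.
From mathcomp Require Import all_boot all_order all_algebra all_field.
Set Implicit Arguments. Unset Strict Implicit. Unset Printing Implicit Defensive.
Import GRing.Theory.
Local Open Scope ring_scope.

Definition finv01 (F : finFieldType) (x : F) : F :=
  if x == 0 then 1 else if x == 1 then 0 else x^-1.

Definition nabla (F : finFieldType) (a b : F) : nat :=
  #|[set x : F | finv01 (x + a + b) + finv01 (x + a) + finv01 (x + b) + finv01 x == 0]|.

Definition omega (F : finFieldType) (i : nat) : nat :=
  #|[set p : F * F | (p.1 * p.2 * (p.1 + p.2) != 0) && (nabla p.1 p.2 == i)]|.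

(* In characteristic 2, f = Inv o (0,1) is x |-> x^-1 + [x = 0] + [x = 1], where 0^-1 = 0
   (as for x^(2^n-2)), and the second derivative D(x) = sum_(v in V) f (x + v) over
   V = span(a, b) is linear in f.  Put L(x) = prod_(v in V) (x + v) = x^4 + s2 x^2 + s3 x,
   an additive polynomial with L' = s3.  Then sum_(v in V) (x + v)^-1 is s3 / L(x) off V
   and s2 / s3 on V, while the indicator parts contribute [x in V] + [x in 1 + V].  So D
   vanishes on the whole of V iff s2 = s3 or (s2, s3) = (0, 1), on the whole of 1 + V iff
   s2 = 1, and nowhere else: nabla(a, b) is 4 times the number of these conditions that hold.
   To count pairs, write b = a t: then s2 = a^2 (t^2 + t + 1) and s3 = a^3 (t^2 + t), so for
   every t <> 0 with t^3 <> 1 each of s2 = 1 and s2 = s3 has exactly one solution a, squaring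
   being bijective.  Pairs with (s2, s3) = (c2, c3) are the ordered pairs of distinct roots
   of X^3 + c2 X + c3, whose roots are a, b, a + b.  Finally x^m = 1 has gcd(m, 2^n - 1)
   solutions in F_(2^n), and X^7 + 1 = (X + 1)(X^3 + X + 1)(X^3 + X^2 + 1), where the last
   two factors are reciprocal to each other. *)

From HB Require Import structures.
From mathcomp Require Import all_boot all_order all_algebra all_field.
From mathcomp Require Import cyclic ring zify.
Set Implicit Arguments. Unset Strict Implicit. Unset Printing Implicit Defensive.
Import GRing.Theory.

Lemma dvdn_exp2_subn1 m n : 1 < m -> (2 ^ m - 1 %| 2 ^ n - 1) = (m %| n).
Proof.
move=> m_gt1; set d := 2 ^ m - 1.
have d_gt1 : 1 < d by rewrite /d ltn_subRL -[1 + 1]/(2 ^ 1) ltn_exp2l.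
have pow_mod : 2 ^ n = 2 ^ (n %% m) %[mod d].
  have -> : 2 ^ n = 2 ^ (n %% m) * (2 ^ m) ^ (n %/ m).
    by rewrite -expnM -expnD addnC mulnC -divn_eq.
  have pow_m : 2 ^ m = 1 %[mod d] by rewrite -(subnK (expn_gt0 2 m)) modnDl.
  by rewrite -modnMmr -modnXm pow_m modnXm exp1n modnMmr muln1.
have small : 2 ^ (n %% m) < d.
  have le_pow : 2 ^ (n %% m) <= 2 ^ m.-1.
    by rewrite leq_exp2l // -ltnS prednK ?ltn_mod ?(ltnW m_gt1).
  have ge2 : 2 <= 2 ^ m.-1 by rewrite -{1}(expn1 2) leq_exp2l // -ltnS prednK ?(ltnW m_gt1).
  have : 2 ^ m = 2 * 2 ^ m.-1 by rewrite -expnS prednK ?(ltnW m_gt1).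
  rewrite /d; lia.
rewrite -eqn_mod_dvd ?expn_gt0 // pow_mod (modn_small small) (modn_small d_gt1).
by rewrite -[X in _ == X](expn0 2) eqn_exp2l.
Qed.

Lemma gcdn_prime p m : prime p -> gcdn p m = if p %| m then p else 1.
Proof.
move=> p_pr; case: ifP => [/gcdn_idPl // | p_ndvd].
by apply/eqP; rewrite -/(coprime p m) prime_coprime // p_ndvd.
Qed.

Local Open Scope ring_scope.

Section FinFieldUnity.
Variable F : finFieldType.

Lemma expf_card_pred (x : F) : x != 0 -> x ^+ #|F|.-1 = 1.
Proof.
move=> x_nz; apply: (mulfI x_nz); rewrite mulr1 -exprS prednK ?expf_card //.
exact: ltnW (finNzRing_gt1 F).
Qed.

Lemma card_unity_dvd m : (0 < m)%N -> (m %| #|F|.-1)%N ->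
  #|[set x : F | x ^+ m == 1]| = m.
Proof.
move=> m_gt0 m_dvd.
have N_gt0 : (0 < #|F|.-1)%N by rewrite -subn1 subn_gt0 finNzRing_gt1.
have [z _ z_prim] : exists2 z, z \in enum [set~ (0 : F)] & (#|F|.-1).-primitive_root z.
  apply/hasP; apply: has_prim_root => //; last by rewrite -cardE cardsC1.
  - by apply/allP => x; rewrite mem_enum in_setC1 unity_rootE => /expf_card_pred ->.
  - exact: enum_uniq.
have w_prim := dvdn_prim_root z_prim m_dvd; set w := z ^+ _ in w_prim.
have -> : [set x : F | x ^+ m == 1] = [set w ^+ i | i : 'I_m].
  apply/setP => x; rewrite inE; apply/eqP/imsetP => [/(prim_rootP w_prim)[i ->] | [i _ ->]].
    by exists i.
  by rewrite -exprM mulnC exprM (prim_expr_order w_prim) expr1n.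
rewrite card_imset ?card_ord // => i j /eqP.
by rewrite (eq_prim_root_expr w_prim) !modn_small // => /eqP /val_inj.
Qed.

Lemma card_unity m : (0 < m)%N -> #|[set x : F | x ^+ m == 1]| = gcdn m #|F|.-1.
Proof.
move=> m_gt0; set d := gcdn m _.
have d_gt0 : (0 < d)%N by rewrite gcdn_gt0 m_gt0.
rewrite -(card_unity_dvd d_gt0 (dvdn_gcdr _ _)); apply: eq_card => x; rewrite !inE.
apply/eqP/eqP => [xm1 | xd1]; last by rewrite -(divnK (dvdn_gcdl m #|F|.-1)) mulnC exprM xd1 expr1n.
have x_nz : x != 0 by apply: contra_eq_neq xm1 => ->; rewrite expr0n gtn_eqF // eq_sym oner_eq0.
have [k _ /dvdnP[l dE]] := Bezoutl #|F|.-1 m_gt0.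
have : x ^+ (d + k * #|F|.-1) = 1 by rewrite dE mulnC exprM xm1 expr1n.
by rewrite exprD mulnC exprM expf_card_pred // expr1n mulr1.
Qed.

End FinFieldUnity.

Section Char2.
Variable F : fieldType.
Hypothesis F2 : (2 \in [pchar F])%N.

(* [ring] ignores the characteristic: a char-2 identity is proved by supplying the
   multiple of 2 by which its two sides differ. *)
Lemma eq_pchar2 (x y z : F) : x = y + z *+ 2 -> x = y.
Proof. by rewrite mulr2n addrr_pchar2 // addr0. Qed.

Lemma addr_eq0_pchar2 (x y : F) : (x + y == 0) = (x == y).
Proof. by rewrite addr_eq0 oppr_pchar2. Qed.

Lemma addr_eq_pchar2 (x y z : F) : (x + y == z) = (x == z + y).
Proof. by rewrite -subr_eq oppr_pchar2. Qed.

Lemma divr_add1_eq0 (y z : F) : z != 0 -> (y / z + 1 == 0) = (y == z).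
Proof.
by move=> z_nz; rewrite addr_eq0_pchar2 // -[1](divff z_nz) (inj_eq (mulIf _)) ?invr_eq0.
Qed.

Definition sigma2 (a b : F) := a ^+ 2 + a * b + b ^+ 2.
Definition sigma3 (a b : F) := a * b * (a + b).
Definition span_poly (a b x : F) := x * (x + a) * (x + b) * (x + a + b).
Definition ddiff (f : F -> F) (a b x : F) := f (x + a + b) + f (x + a) + f (x + b) + f x.

Lemma sigma3_eq0 a b : (sigma3 a b == 0) = [|| a == 0, b == 0 | a == b].
Proof. by rewrite !mulf_eq0 addr_eq0_pchar2 orbA. Qed.

Lemma cubic_sigma a b x :
  (x + a) * (x + b) * (x + a + b) = x ^+ 3 + sigma2 a b * x + sigma3 a b.
Proof.
apply: (eq_pchar2 (z := (a + b) * x ^+ 2 + a * b * x)).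
by rewrite /sigma2 /sigma3; ring.
Qed.

Lemma sqrrD_pchar2 (x y : F) : (x + y) ^+ 2 = x ^+ 2 + y ^+ 2.
Proof. by rewrite sqrrD mulr2n addrr_pchar2 // addr0. Qed.

Lemma span_polyE a b x : span_poly a b x = x ^+ 4 + sigma2 a b * x ^+ 2 + sigma3 a b * x.
Proof.
have -> : span_poly a b x = x * ((x + a) * (x + b) * (x + a + b)) by rewrite /span_poly !mulrA.
by rewrite cubic_sigma; ring.
Qed.

Lemma span_polyD a b x y : span_poly a b (x + y) = span_poly a b x + span_poly a b y.
Proof.
have sqrrD4 u v : (u + v) ^+ 4 = u ^+ 4 + v ^+ 4 :> F.
  by rewrite -[4%N]/(2 * 2)%N !exprM sqrrD_pchar2 sqrrD_pchar2.
by rewrite !span_polyE sqrrD4 sqrrD_pchar2; ring.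
Qed.

Lemma span_poly1 a b : span_poly a b 1 = 1 + sigma2 a b + sigma3 a b.
Proof. by rewrite span_polyE; ring. Qed.

Lemma span_poly_eq0 a b x :
  (span_poly a b x == 0) = [|| x == 0, x == a, x == b | x == a + b].
Proof. by rewrite /span_poly !mulf_eq0 -addrA !addr_eq0_pchar2 -!orbA. Qed.

Lemma ddiffC f a b x : ddiff f a b x = ddiff f b a x.
Proof. by rewrite /ddiff [x + a + b]addrAC; ring. Qed.

Lemma ddiff_addr f a b x : ddiff f a b (x + a) = ddiff f a b x.
Proof. by rewrite /ddiff !addrK_pchar2 // [x + a + b]addrAC; ring. Qed.

Lemma ddiff_span f a b x v : span_poly a b v = 0 -> ddiff f a b (x + v) = ddiff f a b x.
Proof.
move/eqP; rewrite span_poly_eq0 => /or4P[] /eqP ->; first by rewrite addr0.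
- exact: ddiff_addr.
- by rewrite ddiffC ddiff_addr ddiffC.
- by rewrite addrA ddiffC ddiff_addr ddiffC ddiff_addr.
Qed.

Lemma ddiff_shift f a b c x : ddiff (fun y => f (y + c)) a b x = ddiff f a b (x + c).
Proof. by rewrite /ddiff; congr (f _ + f _ + f _ + f _); ring. Qed.

Lemma ddiff_inv_off a b x : span_poly a b x != 0 ->
  ddiff GRing.inv a b x = sigma3 a b / span_poly a b x.
Proof.
rewrite /span_poly !mulf_eq0 !negb_or => /andP[/andP[/andP[x_nz xa_nz] xb_nz] xab_nz].
apply: (eq_pchar2 (z := a * b * x / span_poly a b x + (x + a)^-1 + (x + b)^-1)).
by rewrite /ddiff /sigma3 /span_poly; field; rewrite x_nz xa_nz xb_nz xab_nz.
Qed.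

Lemma ddiff_inv_on a b x : sigma3 a b != 0 -> span_poly a b x = 0 ->
  ddiff GRing.inv a b x = sigma2 a b / sigma3 a b.
Proof.
rewrite sigma3_eq0 !negb_or => /and3P[a_nz b_nz ab_neq] Lx.
have ab_nz : a + b != 0 by rewrite addr_eq0_pchar2.
rewrite -[x]add0r ddiff_span // /ddiff !add0r invr0 addr0.
apply: (eq_pchar2 (z := (a + b)^-1)).
by rewrite /sigma2 /sigma3; field; rewrite a_nz b_nz ab_nz.
Qed.

Lemma ddiff_delta0 a b x : sigma3 a b != 0 ->
  ddiff (fun y => (y == 0)%:R) a b x = (span_poly a b x == 0)%:R.
Proof.
rewrite sigma3_eq0 !negb_or => /and3P[a_nz b_nz ab_neq].
have [Lx | Lx] := eqVneq (span_poly a b x) 0.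
  rewrite -[x]add0r ddiff_span // /ddiff !add0r addr_eq0_pchar2 eqxx.
  by rewrite (negbTE a_nz) (negbTE b_nz) (negbTE ab_neq) !add0r.
move: Lx; rewrite span_poly_eq0 !negb_or => /and4P[x_nz xa xb xab].
rewrite /ddiff -[x + a + b]addrA !addr_eq0_pchar2.
by rewrite (negbTE x_nz) (negbTE xa) (negbTE xb) (negbTE xab) !addr0.
Qed.

End Char2.

Section FinTypeCards.
Variable T : finType.

Lemma card_set_andb (P : pred T) (b : bool) :
  #|[set x | P x && b]| = (b * #|[set x | P x]|)%N.
Proof.
case: b; rewrite ?mul1n ?mul0n; first by apply: eq_card => x; rewrite !inE andbT.
by apply/eqP; rewrite cards_eq0; apply/eqP/setP => x; rewrite !inE andbF.
Qed.

Lemma card_set_orb (P Q : pred T) : (forall x, P x -> ~~ Q x) ->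
  #|[set x | P x || Q x]| = (#|[set x | P x]| + #|[set x | Q x]|)%N.
Proof.
move=> PnQ; rewrite -cardsUI (_ : _ :&: _ = set0) ?cards0 ?addn0.
  by apply: eq_card => x; rewrite !inE.
by apply/setP => x; rewrite !inE; apply/negbTE/negP => /andP[/PnQ/negP].
Qed.

Lemma card_offdiag (A : {set T}) :
  #|[set p : T * T | (p.1 \in A) && (p.2 \in A) && (p.1 != p.2)]| = (#|A| * #|A|.-1)%N.
Proof.
rewrite -sum1dep_card.
have -> : (\sum_(p | (p.1 \in A) && (p.2 \in A) && (p.1 != p.2)) 1 =
           \sum_(x in A) \sum_(y | (y \in A) && (x != y)) 1)%N.
  by rewrite pair_big_dep; apply: eq_bigl => -[x y] /=; rewrite andbA.
rewrite -sum_nat_const; apply: eq_bigr => x xA.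
rewrite sum1dep_card (cardsD1 x A) xA add1n /=; apply: eq_card => y.
by rewrite !inE andbC eq_sym.
Qed.

End FinTypeCards.

Section SecondDerivativeOfFinv01.
Variable F : finFieldType.
Hypothesis F2 : (2 \in [pchar F])%N.

(* The conditions under which the second derivative of finv01 vanishes on span(a, b),
   resp. on 1 + span(a, b), in terms of s2 = sigma2 a b and s3 = sigma3 a b. *)
Definition span_root (s2 s3 : F) := (s2 == 0) && (s3 == 1) || (s2 == s3).
Definition coset_root (s2 : F) := s2 == 1.

Lemma finv01E (x : F) : finv01 x = x^-1 + (x == 0)%:R + (x + 1 == 0)%:R.
Proof.
rewrite /finv01 addr_eq0_pchar2 //; have [-> | x_nz] := eqVneq x 0.
  by rewrite invr0 eq_sym oner_eq0 add0r addr0.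
have [-> | x_neq1] := eqVneq x 1; first by rewrite invr1 addr0 addrr_pchar2.
by rewrite !addr0.
Qed.

Lemma ddiff_finv01 a b x : sigma3 a b != 0 ->
  ddiff (@finv01 F) a b x = ddiff GRing.inv a b x
    + (span_poly a b x == 0)%:R + (span_poly a b (x + 1) == 0)%:R.
Proof.
move=> s3_nz; rewrite -!ddiff_delta0 // -ddiff_shift /ddiff /= !finv01E; ring.
Qed.

Lemma span_rootE (s2 s3 : F) : s3 != 0 ->
  (s2 / s3 + 1 + (1 + s2 + s3 == 0)%:R == 0) = span_root s2 s3.
Proof.
move=> s3_nz; rewrite /span_root; have [L1 | L1_nz] := eqVneq (1 + s2 + s3) 0.
  rewrite -addrA addrr_pchar2 // addr0 mulf_eq0 invr_eq0 (negbTE s3_nz) orbF.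
  have -> : s3 = 1 + s2 by apply/eqP; rewrite -addr_eq0_pchar2 // addrC L1.
  rewrite [1 + s2]addrC addr_eq_pchar2 // addrr_pchar2 // andbb.
  rewrite [s2 == s2 + 1]eq_sym [s2 + 1]addrC addr_eq_pchar2 // addrr_pchar2 //.
  by rewrite oner_eq0 orbF.
rewrite addr0 divr_add1_eq0 //.
suff -> : (s2 == 0) && (s3 == 1) = false by [].
by apply: contra_neqF L1_nz => /andP[/eqP-> /eqP->]; rewrite addr0 addrr_pchar2.
Qed.

Lemma ddiff_finv01_on_eq0 a b x : sigma3 a b != 0 -> span_poly a b x = 0 ->
  (ddiff (@finv01 F) a b x == 0) = span_root (sigma2 a b) (sigma3 a b).
Proof.
move=> s3_nz L0; rewrite ddiff_finv01 // ddiff_inv_on // span_polyD // L0 add0r.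
by rewrite eqxx span_poly1 // span_rootE.
Qed.

Lemma ddiff_finv01_off_eq0 a b x : sigma3 a b != 0 -> span_poly a b x != 0 ->
  (ddiff (@finv01 F) a b x == 0) = (span_poly a b (x + 1) == 0) && (sigma2 a b == 1).
Proof.
move=> s3_nz L_nz; rewrite ddiff_finv01 // ddiff_inv_off // (negbTE L_nz) addr0.
have [L10 | L1_nz] := eqVneq (span_poly a b (x + 1)) 0; last first.
  by rewrite addr0 mulf_eq0 invr_eq0 (negbTE s3_nz) (negbTE L_nz).
have Lx : span_poly a b x = 1 + sigma2 a b + sigma3 a b.
  by apply/eqP; rewrite -addr_eq0_pchar2 // -span_poly1 // -span_polyD // L10.
rewrite Lx divr_add1_eq0 //; last by rewrite -Lx.
rewrite eq_sym [_ == sigma3 a b]addr_eq_pchar2 // addrr_pchar2 //.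
by rewrite addr_eq0_pchar2 // eq_sym.
Qed.

Lemma span_poly_coset_neq0 (a b x : F) : sigma3 a b != 0 -> sigma2 a b = 1 ->
  span_poly a b x = 0 -> span_poly a b (x + 1) != 0.
Proof.
move=> s3_nz s2_1 L0.
by rewrite span_polyD // L0 span_poly1 // s2_1 addrr_pchar2 // !add0r.
Qed.

Lemma ddiff_finv01_eq0 a b x : sigma3 a b != 0 ->
  (ddiff (@finv01 F) a b x == 0) =
    (span_poly a b x == 0) && span_root (sigma2 a b) (sigma3 a b)
    || (span_poly a b (x + 1) == 0) && (sigma2 a b == 1).
Proof.
move=> s3_nz; have [L0 | L_nz] := eqVneq (span_poly a b x) 0; last first.
  exact: ddiff_finv01_off_eq0.
rewrite ddiff_finv01_on_eq0 //=; have [s2_1 | _] := eqVneq (sigma2 a b) 1; last first.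
  by rewrite andbF orbF.
by rewrite (negbTE (span_poly_coset_neq0 s3_nz s2_1 L0)) orbF.
Qed.

Lemma card_span_zeros (a b : F) : sigma3 a b != 0 ->
  #|[set x : F | span_poly a b x == 0]| = 4%N.
Proof.
rewrite sigma3_eq0 // !negb_or => /and3P[a_nz b_nz ab_neq].
have -> : [set x | span_poly a b x == 0] = 0 |: (a |: (b |: [set a + b])).
  by apply/setP => x; rewrite !inE span_poly_eq0.
have a_ab : (a == a + b) = false.
  by rewrite eq_sym [a + b]addrC addr_eq_pchar2 // addrr_pchar2 // (negbTE b_nz).
have b_ab : (b == a + b) = false.
  by rewrite eq_sym addr_eq_pchar2 // addrr_pchar2 // (negbTE a_nz).
rewrite !cardsU1 cards1 !inE ![0 == _]eq_sym (negbTE a_nz) (negbTE b_nz).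
by rewrite addr_eq0_pchar2 // (negbTE ab_neq) a_ab b_ab.
Qed.

Lemma nabla_finv01 (a b : F) : sigma3 a b != 0 ->
  nabla a b = (4 * span_root (sigma2 a b) (sigma3 a b) + 4 * coset_root (sigma2 a b))%N.
Proof.
move=> s3_nz; pose L := span_poly a b.
have -> : nabla a b = #|[set x | (L x == 0) && span_root (sigma2 a b) (sigma3 a b)
                                || (L (x + 1) == 0) && (sigma2 a b == 1)]|.
  by apply: eq_card => x; rewrite !inE; exact: ddiff_finv01_eq0.
rewrite card_set_orb; last first.
  move=> x /andP[/eqP L0 _]; have [s2_1 | _] := eqVneq (sigma2 a b) 1; last by rewrite andbF.
  by rewrite (negbTE (span_poly_coset_neq0 s3_nz s2_1 L0)).
have card_coset : #|[set x | L (x + 1) == 0]| = 4%N.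
  rewrite -(card_span_zeros s3_nz) -[RHS](card_preimset _ (addIr 1)).
  by apply: eq_card => x; rewrite !inE.
rewrite (card_set_andb (fun x => L x == 0)) (card_set_andb (fun x => L (x + 1) == 0)).
by rewrite card_span_zeros // card_coset mulnC [(_ * 4)%N]mulnC.
Qed.

End SecondDerivativeOfFinv01.

Section CubicRoots.
Variable F : finFieldType.
Hypothesis F2 : (2 \in [pchar F])%N.

Definition cubic_roots (c2 c3 : F) : {set F} := [set x | x ^+ 3 + c2 * x + c3 == 0].

Lemma cubic_roots_unity : cubic_roots 0 1 = [set x | x ^+ 3 == 1].
Proof. by apply/setP => x; rewrite !inE mul0r addr0 addr_eq0_pchar2. Qed.

Lemma card_cubic_roots_reciprocal :
  #|[set x : F | x ^+ 3 + x ^+ 2 + 1 == 0]| = #|cubic_roots 1 1|.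
Proof.
rewrite -[RHS](card_preimset _ invr_inj); apply: eq_card => x; rewrite !inE.
have [-> | x_nz] := eqVneq x 0; first by rewrite invr0 !expr0n /= mulr0.
have -> : x^-1 ^+ 3 + 1 * x^-1 + 1 = (x ^+ 3 + x ^+ 2 + 1) / x ^+ 3 by field.
by rewrite mulf_eq0 invr_eq0 expf_eq0 (negbTE x_nz) andbF orbF.
Qed.

Lemma card_unity7 : #|[set x : F | x ^+ 7 == 1]| = (1 + 2 * #|cubic_roots 1%R 1%R : {set F}|)%N.
Proof.
set R1 := cubic_roots 1 1; set R2 := [set x : F | x ^+ 3 + x ^+ 2 + 1 == 0].
have factor7 (x : F) : (x + 1) * (x ^+ 3 + x + 1) * (x ^+ 3 + x ^+ 2 + 1) = x ^+ 7 + 1.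
  apply: (eq_pchar2 F2 (z := x ^+ 6 + x ^+ 5 + 2 * x ^+ 4 + 2 * x ^+ 3 + x ^+ 2 + x)).
  by ring.
have -> : [set x : F | x ^+ 7 == 1] = 1 |: (R1 :|: R2).
  apply/setP => x; rewrite !inE mul1r -addr_eq0_pchar2 // -factor7 !mulf_eq0.
  by rewrite addr_eq0_pchar2 // orbA.
have disjR : R1 :&: R2 = set0.
  apply/setP => x; rewrite !inE; apply/negbTE/negP => /andP[/eqP r1 /eqP r2].
  have : x * (x - 1) = (x ^+ 3 + x ^+ 2 + 1) - (x ^+ 3 + 1 * x + 1) by ring.
  rewrite r1 r2 subrr => /eqP; rewrite mulf_eq0 subr_eq0 => /orP[] /eqP x_val.
    by move: r1; rewrite x_val expr0n mulr0 !add0r => /eqP; rewrite oner_eq0.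
  by move: r1; rewrite x_val expr1n mulr1 -addrA addrr_pchar2 // addr0 => /eqP; rewrite oner_eq0.
have one_nR : 1 \notin R1 :|: R2.
  by rewrite !inE !expr1n mul1r -addrA addrr_pchar2 // addr0 oner_eq0.
rewrite cardsU1 one_nR cardsU disjR cards0 subn0 card_cubic_roots_reciprocal.
by rewrite addnn -mul2n.
Qed.

End CubicRoots.

Section PairCount.
Variable F : finFieldType.
Hypothesis F2 : (2 \in [pchar F])%N.

Definition nondeg (p : F * F) := sigma3 p.1 p.2 != 0.

Definition npairs (P : F -> F -> bool) : nat :=
  #|[set p | nondeg p && P (sigma2 p.1 p.2) (sigma3 p.1 p.2)]|.

Lemma npairsE P : npairs P = (\sum_(p | nondeg p) P (sigma2 p.1 p.2) (sigma3 p.1 p.2))%N.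
Proof.
by rewrite /npairs -sum1dep_card big_mkcondr /=; apply: eq_bigr => p _; case: P.
Qed.

Lemma omega_npairs i :
  omega F i = npairs (fun s2 s3 => 4 * span_root s2 s3 + 4 * coset_root s2 == i)%N.
Proof.
apply: eq_card => p; rewrite !inE -/(sigma3 p.1 p.2) -/(nondeg p).
by case: (boolP (nondeg p)) => //= s3_nz; rewrite nabla_finv01.
Qed.

Lemma sigma2_scale (a t : F) : sigma2 a (a * t) = a ^+ 2 * (t ^+ 2 + t + 1).
Proof. by rewrite /sigma2; ring. Qed.

Lemma sigma3_scale (a t : F) : sigma3 a (a * t) = a ^+ 3 * (t ^+ 2 + t).
Proof. by rewrite /sigma3; ring. Qed.

Definition ratios : {set F} := [set t | (t != 0) && (t != 1)].

Definition ratio_fiber (P : F -> F -> bool) (t : F) : {set F} :=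
  [set a | (a != 0) && P (a ^+ 2 * (t ^+ 2 + t + 1)) (a ^+ 3 * (t ^+ 2 + t))].

Lemma npairs_fibers P : npairs P = (\sum_(t in ratios) #|ratio_fiber P t|)%N.
Proof.
pose Q a t := (t \in ratios) && P (a ^+ 2 * (t ^+ 2 + t + 1)) (a ^+ 3 * (t ^+ 2 + t)).
rewrite /npairs -sum1dep_card.
have -> : (\sum_(p | nondeg p && P (sigma2 p.1 p.2) (sigma3 p.1 p.2)) 1 =
    \sum_(a | a != 0%R) \sum_(b | (b != 0%R) && (b != a) && P (sigma2 a b) (sigma3 a b)) 1)%N.
  rewrite pair_big_dep; apply: eq_bigl => -[a b] /=.
  by rewrite /nondeg sigma3_eq0 // !negb_or [b == a]eq_sym -!andbA.
rewrite (eq_bigr (fun a => \sum_(t | Q a t) 1)%N); last first.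
  move=> a a_nz; rewrite (reindex_inj (mulfI a_nz)); apply: eq_bigl => t.
  rewrite /Q inE mulf_eq0 (negbTE a_nz) -[X in _ != X]mulr1 (inj_eq (mulfI a_nz)).
  by rewrite sigma2_scale sigma3_scale.
rewrite (exchange_big_dep (mem ratios)) /=; last by move=> a t _ /andP[].
apply: eq_bigr => t t_ratio; rewrite sum1dep_card; apply: eq_card => a.
by rewrite !inE /Q t_ratio.
Qed.

Lemma card_ratios : #|ratios| = (#|F| - 2)%N.
Proof.
have -> : ratios = ~: [set 0; 1] by apply/setP => t; rewrite !inE negb_or.
by rewrite cardsCs setCK cards2 eq_sym oner_eq0.
Qed.

Lemma npairs_all : npairs (fun _ _ => true) = ((#|F| - 2) * (#|F| - 1))%N.
Proof.
rewrite npairs_fibers -card_ratios -sum_nat_const; apply: eq_bigr => t _.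
have -> : ratio_fiber (fun _ _ => true) t = [set~ 0] by apply/setP => a; rewrite !inE andbT.
by rewrite cardsC1 subn1.
Qed.

Lemma npairs_ratio_count P :
  (forall t, t \in ratios -> #|ratio_fiber P t| = (t ^+ 2 + t + 1 != 0)) ->
  npairs P = (#|F| - 1 - #|cubic_roots 0%R 1%R : {set F}|)%N.
Proof.
move=> fiberE; rewrite npairs_fibers (eq_bigr _ fiberE).
have -> : (\sum_(t in ratios) (t ^+ 2 + t + 1 != 0)%R)%N =
           #|[set t in ratios | t ^+ 2 + t + 1 != 0]|.
  by rewrite -sum1dep_card big_mkcondr; apply: eq_bigr => t _; case: (_ != 0).
have -> : [set t in ratios | t ^+ 2 + t + 1 != 0] = [set~ 0] :\: cubic_roots 0 1.
  apply/setP => t; rewrite !inE mul0r addr0 [t ^+ 3 + 1 == 0]addr_eq0_pchar2 //.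
  rewrite -[t ^+ 3 == 1]subr_eq0.
  have -> : t ^+ 3 - 1 = (t - 1) * (t ^+ 2 + t + 1) by ring.
  by rewrite mulf_eq0 subr_eq0 negb_or; case: (t != 0); rewrite ?andbT ?andbF.
rewrite cardsD (setIidPr _) ?cardsC1 ?subn1 //.
apply/subsetP => t; rewrite !inE; apply: contraTneq => ->.
by rewrite expr0n mul0r !add0r oner_eq0.
Qed.

Lemma card_sqr_eq (c : F) : #|[set a : F | a ^+ 2 == c]| = 1%N.
Proof.
have sqr_inj : injective (fun a : F => a ^+ 2).
  move=> u v /eqP; rewrite -addr_eq0_pchar2 // -sqrrD_pchar2 // sqrf_eq0.
  by rewrite addr_eq0_pchar2 // => /eqP.
by rewrite -[RHS](cards1 c) -[RHS](card_preimset _ sqr_inj); apply: eq_card => a; rewrite !inE.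
Qed.

Lemma npairs_coset_root :
  npairs (fun s2 _ => coset_root s2) = (#|F| - 1 - #|cubic_roots 0%R 1%R : {set F}|)%N.
Proof.
apply: npairs_ratio_count => t _; rewrite /ratio_fiber /coset_root.
have [g0 | g_nz] := eqVneq (t ^+ 2 + t + 1) 0.
  apply/eqP; rewrite cards_eq0; apply/eqP/setP => a.
  by rewrite !inE g0 mulr0 [0 == _]eq_sym oner_eq0 andbF.
rewrite /= -[RHS](card_sqr_eq (t ^+ 2 + t + 1)^-1); apply: eq_card => a; rewrite !inE.
rewrite (can2_eq (mulfK g_nz) (divfK g_nz)) mul1r.
have [-> | //] := eqVneq a 0.
by rewrite expr0n /= eq_sym invr_eq0 (negbTE g_nz).
Qed.

Lemma npairs_sigma2_eq_sigma3 :
  npairs (fun s2 s3 => s2 == s3) = (#|F| - 1 - #|cubic_roots 0%R 1%R : {set F}|)%N.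
Proof.
apply: npairs_ratio_count => t; rewrite /ratio_fiber inE => /andP[t_nz t_neq1].
have h_nz : t ^+ 2 + t != 0.
  have -> : t ^+ 2 + t = t * (t + 1) by ring.
  by rewrite mulf_neq0 // addr_eq0_pchar2.
have [g0 | g_nz] := eqVneq (t ^+ 2 + t + 1) 0.
  apply/eqP; rewrite cards_eq0; apply/eqP/setP => a; rewrite !inE g0 mulr0 [0 == _ * _]eq_sym.
  by rewrite mulf_eq0 expf_eq0 (negbTE h_nz) orbF /= andNb.
rewrite -[RHS](cards1 ((t ^+ 2 + t + 1) / (t ^+ 2 + t))); apply: eq_card => a; rewrite !inE.
have [-> | a_nz] := eqVneq a 0.
  by rewrite /= [0 == _]eq_sym mulf_eq0 invr_eq0 (negbTE g_nz) (negbTE h_nz).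
have -> : a ^+ 3 * (t ^+ 2 + t) = a * (t ^+ 2 + t) * a ^+ 2 by ring.
rewrite /= [a ^+ 2 * _]mulrC (inj_eq (mulIf (expf_neq0 2 a_nz))).
by rewrite eq_sym -(can2_eq (mulfK h_nz) (divfK h_nz)).
Qed.

Lemma cubic_root_pair (c2 c3 a b : F) : a != b ->
  (a ^+ 3 + c2 * a + c3 == 0) && (b ^+ 3 + c2 * b + c3 == 0)
    = (sigma2 a b == c2) && (sigma3 a b == c3).
Proof.
move=> ab_neq; have ab_nz : a + b != 0 by rewrite addr_eq0_pchar2.
have root_a : a ^+ 3 + sigma2 a b * a + sigma3 a b = 0.
  by rewrite -cubic_sigma // addrr_pchar2 // !mul0r.
apply/andP/andP => [[/eqP ra /eqP rb] | [/eqP <- /eqP <-]]; last first.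
  rewrite root_a eqxx; split=> //.
  by rewrite -cubic_sigma // [b + a]addrC addrr_pchar2 // mulr0 mul0r.
have s2E : sigma2 a b = c2.
  apply/eqP; rewrite -addr_eq0_pchar2 //; apply/eqP/(mulfI ab_nz); rewrite mulr0.
  apply: (eq_pchar2 F2 (z := a ^+ 2 * b + a * b ^+ 2 - c3)).
  by rewrite -[0]addr0 -{1}ra -rb /sigma2; ring.
split; first by rewrite s2E.
by rewrite s2E in root_a; apply/eqP/(addrI (a ^+ 3 + c2 * a)); rewrite root_a ra.
Qed.

Lemma npairs_sigma (c2 c3 : F) : c3 != 0 ->
  npairs (fun s2 s3 => (s2 == c2) && (s3 == c3))
    = (#|cubic_roots c2 c3| * #|cubic_roots c2 c3|.-1)%N.
Proof.
move=> c3_nz; rewrite -card_offdiag; apply: eq_card => -[a b]; rewrite !inE /nondeg /=.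
have [<- | ab_neq] := eqVneq a b.
  by rewrite andbF /sigma3 addrr_pchar2 // mulr0 eqxx.
rewrite andbT cubic_root_pair //; apply: andb_idl => /andP[_ /eqP ->]; exact: c3_nz.
Qed.

Lemma omega_relations :
  [/\ omega F 8 = npairs (fun s2 s3 => (s2 == 1%R) && (s3 == 1%R)),
      omega F 4 + 2 * omega F 8 =
        npairs (fun s2 s3 => (s2 == 0%R) && (s3 == 1%R)) + npairs (fun s2 s3 => s2 == s3)
        + npairs (fun s2 _ => coset_root s2)
    & omega F 0 + omega F 4 + omega F 8 = npairs (fun _ _ => true)]%N.
Proof.
rewrite !omega_npairs !npairsE; split.
- apply: eq_bigr => p _; rewrite /span_root /coset_root.
  have [-> | _] := eqVneq (sigma2 p.1 p.2) 1; last by case: (_ || _).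
  by rewrite oner_eq0 [1 == _]eq_sym; case: (_ == 1).
- rewrite big_distrr -!big_split /=; apply: eq_bigr => p _; rewrite /span_root /coset_root.
  have : [&& sigma2 p.1 p.2 == 0, sigma3 p.1 p.2 == 1 & sigma2 p.1 p.2 == sigma3 p.1 p.2]
         = false.
    by apply/negbTE/and3P => -[/eqP-> /eqP->]; rewrite eq_sym oner_eq0.
  move: (sigma2 p.1 p.2 == 0) (sigma3 p.1 p.2 == 1) (sigma2 p.1 p.2 == sigma3 p.1 p.2).
  by move: (sigma2 p.1 p.2 == 1) => [] [] [] [].
- rewrite -big_split /= -big_split /=; apply: eq_bigr => p _.
  by case: (span_root _ _); case: (coset_root _).
Qed.

End PairCount.

Section CubicRootCounts.
Variables (F : finFieldType) (n : nat).
Hypotheses (F2 : (2 \in [pchar F])%N) (cardF : #|F| = (2 ^ n)%N).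

Lemma card_cube_unity : #|cubic_roots 0%R 1%R : {set F}| = (if odd n then 1 else 3)%N.
Proof.
rewrite cubic_roots_unity // card_unity // cardF -subn1 gcdn_prime //.
by rewrite (@dvdn_exp2_subn1 2 n) // dvdn2; case: (odd n).
Qed.

Lemma card_cubic_roots11 : #|cubic_roots 1%R 1%R : {set F}| = (if 3 %| n then 3 else 0)%N.
Proof.
have := card_unity F (isT : 0 < 7)%N.
rewrite card_unity7 // cardF -subn1 gcdn_prime // (@dvdn_exp2_subn1 3 n) //.
by case: (3 %| n)%N; lia.
Qed.

End CubicRootCounts.

Unset Implicit Arguments.

Theorem mainTheorem2 (n : nat) (F : finFieldType) :
  (2 <= n)%N -> #|F| = (2 ^ n)%N ->
  [/\ (omega F 8 = if (3 %| n)%N then 6 else 0)%N,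
      (omega F 4)%:Z =
        (if ~~ odd n then
           (if (3 %| n)%N then 2 ^+ n.+1 - 14 else 2 ^+ n.+1 - 2)
         else
           (if (3 %| n)%N then 2 ^+ n.+1 - 16 else 2 ^+ n.+1 - 4)) :> int
    & (omega F 0)%:Z =
        (if ~~ odd n then
           (if (3 %| n)%N then 2 ^+ (2 * n) - 5 * 2 ^+ n + 10
            else 2 ^+ (2 * n) - 5 * 2 ^+ n + 4)
         else
           (if (3 %| n)%N then 2 ^+ (2 * n) - 5 * 2 ^+ n + 12
            else 2 ^+ (2 * n) - 5 * 2 ^+ n + 6)) :> int].
Proof.
move=> n_ge2 cardF; have F2 : (2 \in [pchar F])%N by exact: card_finPcharP cardF _.
have [o8 o4 o0] := omega_relations F2.
rewrite npairs_sigma ?oner_neq0 // (card_cubic_roots11 F2 cardF) in o8.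
rewrite npairs_sigma ?oner_neq0 // npairs_sigma2_eq_sigma3 // npairs_coset_root // in o4.
rewrite (card_cube_unity F2 cardF) in o4.
rewrite npairs_all // cardF in o0; rewrite cardF in o4.
have q_ge4 : (4 <= 2 ^ n)%N by rewrite -[4%N]/(2 ^ 2)%N leq_exp2l.
have Posz_exp2 k : (2 ^+ k : int) = (2 ^ k)%N by rewrite -natz natrX.
rewrite o8 !Posz_exp2 mul2n -addnn expnD expnS.
move: (2 ^ n)%N q_ge4 o4 o0 => q q_ge4 o4 o0.
by case: (odd n) o4; case: (3 %| n)%N o8 => /= o8 o4; split => //; nia.
Qed.
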